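(* Let $\Gamma$ be a finite graph with $m$ vertices endowed with a total order $\prec$ on $V(\Gamma)$, let $p:\tilde\Gamma\to\Gamma$ be a covering, and let $F$ be a finite nonempty subset of $V(\tilde\Gamma)$. Then there exists an induced subgraph $\Lambda$ of $\tilde\Gamma$ with $|V(\Lambda)|\leqslant|F|\cdot2^{m-1}$ such that $\phi=p|_\Lambda:\Lambda\to\Gamma$ has SIPL for $F$ (with respect to $\prec$). Furthermore, if the induced subgraph of $\tilde\Gamma$ on $F$ is connected, then $\Lambda$ can be chosen to be connected.
   Context: All graphs are undirected and simplicial ($\tilde\Gamma$ may be infinite). A map of graphs sends vertices to vertices and adjacent vertices to adjacent vertices. A covering $p:\tilde\Gamma\to\Gamma$ is a surjective map of graphs whose restriction to the set of neighbours of each vertex $v'$ is a bijection onto the set of neighbours of $p(v')$. A path in $\Gamma$ is a tuple $(v_0,\dots,v_k)$ of pairwise distinct vertices with $\{v_i,v_{i+1}\}$ an edge for all $i$; it is semi-induced (w.r.t. $\prec$) if $\{v_i,v_j\}$ is not an edge whenever $j\ge i+2$ and $v_j\prec v_{i+1}$. For a map of graphs $\phi:\Lambda\to\Gamma$, a lift of $(v_0,\dots,v_k)$ is a path $(v_0',\dots,v_k')$ in $\Lambda$ with $\phi(v_i')=v_i$. $\phi$ has SIPL for $F\subseteq V(\Lambda)$ if for each $v'\in F$ every semi-induced path in $\Gamma$ starting at $\phi(v')$ has a lift to $\Lambda$ starting at $v'$. *)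

From mathcomp Require Import all_boot.
From Stdlib Require List.
Set Implicit Arguments. Unset Strict Implicit. Unset Printing Implicit Defensive.

(* Conventions.
   - The finite graph Gamma: vertex type V0 : finType, adjacency e : rel V0
     (assumed symmetric and irreflexive = simple graph).
   - The possibly infinite graph tilde-Gamma: vertex type V : Type with a
     Prop-valued adjacency E (assumed symmetric and irreflexive).
   - A path (v_0,...,v_k) is a nonempty list. *)

Section GraphDefs.
Variables (V0 : finType) (e : rel V0) (V : Type) (E : V -> V -> Prop).

Definition simple_graph0 : Prop := symmetric e /\ irreflexive e.
Definition simple_graph : Prop :=
  (forall x y, E x y -> E y x) /\ (forall x, ~ E x x).

Definition strict_total_order (lt : rel V0) : Prop :=
  irreflexive lt /\ transitive lt /\ (forall x y, x != y -> lt x y || lt y x).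

Definition covering (p : V -> V0) : Prop :=
  (forall u, exists v', p v' = u) /\
  (forall v' w', E v' w' -> e (p v') (p w')) /\
  (forall v' w1 w2, E v' w1 -> E v' w2 -> p w1 = p w2 -> w1 = w2) /\
  (forall v' u, e (p v') u -> exists w', E v' w' /\ p w' = u).

Definition is_path0 (s : seq V0) : Prop :=
  s <> [::] /\ uniq s /\
  (forall i x0, i.+1 < size s -> e (nth x0 s i) (nth x0 s i.+1)).

Definition semi_induced (lt : rel V0) (s : seq V0) : Prop :=
  is_path0 s /\
  forall i j x0, i.+2 <= j -> j < size s ->
    lt (nth x0 s j) (nth x0 s i.+1) -> ~~ e (nth x0 s i) (nth x0 s j).

Fixpoint E_chain (l : list V) : Prop :=
  match l with
  | x :: ((y :: _) as l') => E x y /\ E_chain l'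
  | _ => True
  end.

Definition lift_in (p : V -> V0) (L : V -> Prop) (s : seq V0) (v' : V)
    (l : list V) : Prop :=
  ohead l = Some v' /\ List.NoDup l /\ E_chain l /\
  (forall x, List.In x l -> L x) /\ List.map p l = s.

Definition SIPL (lt : rel V0) (p : V -> V0) (L : V -> Prop) (F : list V) : Prop :=
  forall v', List.In v' F -> L v' /\
    forall s, semi_induced lt s -> ohead s = Some (p v') ->
      exists l, lift_in p L s v' l.

Definition connected_on (S : V -> Prop) : Prop :=
  forall x y, S x -> S y ->
    exists l : list V, ohead l = Some x /\ last x l = y /\
      E_chain l /\ (forall z, List.In z l -> S z).

End GraphDefs.

(* A semi-induced path is determined by its first vertex and its
   set of remaining vertices (its second vertex is the [lt]-least neighbour of
   the first among them, and so on), and a path in Gamma has a unique lift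
   through a covering once the lift of its first vertex is fixed.  So for
   v' in F and S a subset of V(Gamma) \ {p v'} there is at most one end of a
   lift from v' of a semi-induced path with vertex set {p v'} + S.  Let
   Lambda be spanned by these ends: at most |F| 2^(m-1) vertices.  Every
   vertex on the lift of a semi-induced path from p v' ends the lift of a
   prefix, which is again semi-induced, so Lambda contains all these lifts;
   this gives SIPL, and also joins each vertex of Lambda to F inside Lambda,
   whence connectedness. *)
From mathcomp Require Import all_boot.
From Stdlib Require List.
From mathcomp Require Import zify.
From Stdlib Require Import ClassicalEpsilon.
Set Implicit Arguments. Unset Strict Implicit. Unset Printing Implicit Defensive.

Lemma List_map_map (A B : Type) (f : A -> B) (l : list A) : List.map f l = map f l.
Proof. by elim: l => //= a l ->. Qed.

Lemma List_length_size (A : Type) (l : list A) : List.length l = size l.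
Proof. by elim: l => //= a l ->. Qed.

Lemma List_InP (T : eqType) (x : T) (s : seq T) : List.In x s <-> x \in s.
Proof.
elim: s => [|a s IH] //=; rewrite in_cons; split.
- by case=> [->|/IH ->]; rewrite ?eqxx ?orbT.
- by case/orP=> [/eqP->|/IH]; auto.
Qed.

Lemma uniq_NoDup (T : eqType) (s : seq T) : uniq s -> List.NoDup s.
Proof.
elim: s => [|a s IH] /=; first by constructor.
by case/andP=> /negP nas /IH; constructor => // /List_InP.
Qed.

Lemma In_last_take (T : Type) (x0 z : T) (l : list T) :
  List.In z l -> exists k, last x0 (take k.+1 l) = z.
Proof.
elim: l x0 => [|a t IH] x0 //= [->|/(IH a) [k lk]]; last by exists k.+1.
by exists 0; rewrite take0.
Qed.

Section SemiInduced.
Variables (V0 : finType) (e lt : rel V0).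

Lemma semi_induced_path x t : semi_induced e lt (x :: t) -> path e x t.
Proof. by move=> [[_ [_ adj]] _]; apply/(pathP x) => i; apply: adj. Qed.

Lemma semi_induced_uniq s : semi_induced e lt s -> uniq s.
Proof. by case=> [[_ [u _]] _]. Qed.

Lemma semi_induced_behead x a r :
  semi_induced e lt [:: x, a & r] -> semi_induced e lt (a :: r).
Proof.
move=> [[_ [/andP [_ u] adj]] si]; split; first do !split => //.
- by move=> i x0 il; apply: (adj i.+1).
- by move=> i j x0 ij jl; apply: (si i.+1 j.+1).
Qed.

Lemma semi_induced_take s n : semi_induced e lt s -> semi_induced e lt (take n.+1 s).
Proof.
move=> [[ne [u adj]] si]; split; [split; [|split]|].
- by case: s ne {u adj si}.
- exact: take_uniq.
- move=> i x0; rewrite size_take => il.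
  rewrite !nth_take; try (move: il; case: ifP; lia).
  by apply: adj; move: il; case: ifP; lia.
- move=> i j x0 ij; rewrite size_take => jl.
  rewrite !nth_take; try (move: jl; case: ifP; lia).
  by apply: si => //; move: jl; case: ifP; lia.
Qed.

Lemma semi_induced_nonadj x a r y :
  semi_induced e lt [:: x, a & r] -> y \in r -> lt y a -> ~~ e x y.
Proof.
move=> [_ si] yr; have := si 0 (index y r).+2 y isT.
by rewrite /= nth_index //; apply; rewrite !ltnS index_mem.
Qed.

Hypothesis lto : strict_total_order lt.

(* By induction: the second vertex is forced to be the [lt]-least vertex of the
   path adjacent to the first one. *)
Lemma semi_induced_perm_eq s1 s2 : semi_induced e lt s1 -> semi_induced e lt s2 ->
  ohead s1 = ohead s2 -> perm_eq s1 s2 -> s1 = s2.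
Proof.
elim: s1 s2 => [|x t1 IH] [|y t2] //; try by [move=> [[]] | move=> _ [[]]].
move=> si1 si2 [yx]; subst y; rewrite perm_cons.
case: t1 IH si1 => [|a r1] IH si1; first by rewrite perm_sym => /perm_nilP ->.
case: t2 si2 => [|b r2] si2 pt; first by have := perm_size pt.
have ab : a = b.
  apply/eqP/negPn/negP => nab.
  have /andP [xa _] := semi_induced_path si1.
  have /andP [xb _] := semi_induced_path si2.
  have ar2 : a \in r2.
    by move: (perm_mem pt a); rewrite !in_cons eqxx (negbTE nab) /= => <-.
  have br1 : b \in r1.
    by move: (perm_mem pt b); rewrite !in_cons eqxx eq_sym (negbTE nab) /= => ->.
  case/orP: (lto.2.2 a b nab).
  - by move/(semi_induced_nonadj si2 ar2)/negP; apply.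
  - by move/(semi_induced_nonadj si1 br1)/negP; apply.
rewrite -ab in si2 pt *; congr (_ :: _).
by apply: IH; [exact: semi_induced_behead si1|exact: semi_induced_behead si2|done|].
Qed.

End SemiInduced.

Section Lifts.
Variables (V0 : finType) (e : rel V0) (V : Type) (E : V -> V -> Prop) (p : V -> V0).

Definition lifts (s : seq V0) (v' : V) (l : list V) :=
  ohead l = Some v' /\ E_chain E l /\ map p l = s.

Lemma E_chain_take (l : list V) n : E_chain E l -> E_chain E (take n l).
Proof.
elim: l n => [|a [|b r] IH] [|n] //= [Eab ch].
by case: n => [|n] //=; split => //; apply: (IH n.+1).
Qed.

Lemma lifts_take s v' l n : lifts s v' l -> lifts (take n.+1 s) v' (take n.+1 l).
Proof.
move=> [h [ch m]]; do 2?split; last by rewrite map_take m.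
- by case: l h {ch m}.
- exact: E_chain_take.
Qed.

Hypothesis cov : covering e E p.

Lemma lift_exists v' s : path e (p v') s -> exists l, lifts (p v' :: s) v' l.
Proof.
elim: s v' => [|a s IH] v' /=; first by exists [:: v'].
case/andP=> /(cov.2.2.2 v') [w' [Evw <-]] /IH [l [h [ch m]]].
exists (v' :: l); do 2?split => //; last by rewrite /= m.
by case: l h ch {m} => //= _ l [->].
Qed.

Lemma lift_unique s v' l1 l2 : lifts s v' l1 -> lifts s v' l2 -> l1 = l2.
Proof.
elim: l1 s v' l2 => [|a t1 IH] s v' [|b t2] //; try by [case | move=> _ []].
move=> [[ha] [ch1 m1]] [[hb] [ch2 m2]]; subst a b; congr (_ :: _).
rewrite -m2 in m1; case: m1 {m2}.
case: t1 t2 IH ch1 ch2 => [|a1 r1] [|b1 r2] IH //= [Ea ch1] [Eb ch2] [pab m1].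
have eab := cov.2.2.1 v' a1 b1 Ea Eb pab; subst b1.
by apply: (IH (map p (a1 :: r1)) a1); do !split; rewrite //= m1.
Qed.

End Lifts.

Section Walks.
Variables (V : Type) (E : V -> V -> Prop).

Inductive walk (Q : V -> Prop) : V -> V -> Prop :=
| walk_nil a : Q a -> walk Q a a
| walk_cons a b c : Q a -> E a b -> walk Q b c -> walk Q a c.

Lemma walk_rcons Q a b c : walk Q a b -> E b c -> Q c -> walk Q a c.
Proof.
elim=> [x Qx|x y z Qx Exy _ IH] Ebc Qc; last exact: walk_cons Qx Exy (IH Ebc Qc).
exact: walk_cons Qx Ebc (walk_nil Qc).
Qed.

Lemma walk_trans Q a b c : walk Q a b -> walk Q b c -> walk Q a c.
Proof. by elim=> // x y z Qx Exy _ IH /IH; apply: walk_cons. Qed.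

Lemma walk_sub (Q Q' : V -> Prop) a b :
  (forall x, Q x -> Q' x) -> walk Q a b -> walk Q' a b.
Proof.
move=> QQ'; elim=> [x /QQ' /walk_nil //|x y z /QQ' Qx Exy _]; exact: walk_cons.
Qed.

Lemma E_chain_walk Q (l : list V) a c : ohead l = Some a -> last a l = c ->
  E_chain E l -> (forall z, List.In z l -> Q z) -> walk Q a c.
Proof.
elim: l a => [|x [|b r] IH] a //= [<-] lc ch Ql.
  by rewrite -lc; apply/walk_nil/Ql; left.
apply: walk_cons (Ql x (or_introl erefl)) ch.1 _.
by apply: IH ch.2 _ => // z zl; apply: Ql; right.
Qed.

Lemma walk_E_chain Q a c : walk Q a c -> exists l : list V,
  ohead l = Some a /\ last a l = c /\ E_chain E l /\ (forall z, List.In z l -> Q z).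
Proof.
elim=> [x Qx|x y z Qx Exy _ [l [h [lz [ch Ql]]]]].
  by exists [:: x]; split; [|split; [|split]] => // w [<-|].
exists (x :: l); case: l h lz ch Ql => [|b l] //= [->] lz ch Ql.
by split; [|split; [|split]] => // w [<-|/Ql].
Qed.

Hypothesis E_sym : forall x y, E x y -> E y x.

Lemma walk_sym Q a b : walk Q a b -> walk Q b a.
Proof.
elim=> [x Qx|x y z Qx Exy _ IH]; first exact: walk_nil.
exact: walk_rcons IH (E_sym Exy) Qx.
Qed.

Lemma connected_on_walk_from (Q Q' : V -> Prop) :
  (forall x, Q x -> Q' x) -> (forall y, Q' y -> exists2 x, Q x & walk Q' x y) ->
  connected_on E Q -> connected_on E Q'.
Proof.
move=> QQ' reach conQ y1 y2 /reach [x1 Qx1 w1] /reach [x2 Qx2 w2].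
have [l [h [lx [ch Ql]]]] := conQ x1 x2 Qx1 Qx2.
have w12 := walk_sub QQ' (E_chain_walk h lx ch Ql).
exact/walk_E_chain/(walk_trans (walk_trans (walk_sym w1) w12) w2).
Qed.

End Walks.

Section LiftVertices.
Variables (V0 : finType) (e lt : rel V0) (V : Type) (E : V -> V -> Prop) (p : V -> V0).
Hypotheses (lto : strict_total_order lt) (cov : covering e E p).

Definition lift_end (v' : V) (S : {set V0}) (w : V) : Prop :=
  exists s l, [/\ semi_induced e lt (p v' :: s), [set x in s] = S,
                  lifts E p (p v' :: s) v' l & last v' l = w].

Lemma lift_end_unique v' S w1 w2 : lift_end v' S w1 -> lift_end v' S w2 -> w1 = w2.
Proof.
move=> [s1 [l1 [si1 S1 lift1 <-]]] [s2 [l2 [si2 S2 lift2 <-]]].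
have s12 : p v' :: s1 = p v' :: s2.
  apply: (semi_induced_perm_eq lto si1 si2) => //; rewrite perm_cons.
  have /andP [_ u1] := semi_induced_uniq si1.
  have /andP [_ u2] := semi_induced_uniq si2.
  apply: uniq_perm u1 u2 _ => x.
  by have := congr1 (fun S : {set V0} => x \in S) (etrans S1 (esym S2)); rewrite !inE.
by rewrite s12 in lift1; rewrite (lift_unique cov lift1 lift2).
Qed.

Lemma lift_end_prefix v' s l z : semi_induced e lt (p v' :: s) ->
  lifts E p (p v' :: s) v' l -> List.In z l ->
  exists2 S, S \in powerset [set~ p v'] & lift_end v' S z.
Proof.
move=> si lift /(In_last_take v') [k lz]; exists [set x in take k s].
  rewrite powersetE; apply/subsetP => x; rewrite !inE => /mem_take xs.
  by apply: contraTneq xs => ->; have /andP [] := semi_induced_uniq si.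
exists (take k s), (take k.+1 l); split => //.
- exact: semi_induced_take si.
- exact: lifts_take lift.
Qed.

(* The default [v'] keeps every vertex of [lift_vertices F] joined to [F]. *)
Definition endpoint (v' : V) (S : {set V0}) : V :=
  epsilon (inhabits v')
    (fun w => lift_end v' S w \/ (~ (exists w, lift_end v' S w) /\ w = v')).

Lemma endpoint_spec v' S :
  lift_end v' S (endpoint v' S) \/ (~ (exists w, lift_end v' S w) /\ endpoint v' S = v').
Proof.
apply: (epsilon_spec (inhabits v')
  (fun w => lift_end v' S w \/ (~ (exists w, lift_end v' S w) /\ w = v'))).
case: (classic (exists w, lift_end v' S w)) => [[w lw]|nlw].
- by exists w; left.
- by exists v'; right.
Qed.

Lemma endpoint_lift_end v' S w : lift_end v' S w -> endpoint v' S = w.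
Proof.
move=> lw; case: (endpoint_spec v' S) => [/lift_end_unique/(_ lw) //|[nlw _]].
by case: nlw; exists w.
Qed.

Definition lift_vertices (F : list V) : list V :=
  List.flat_map (fun v' => List.map (endpoint v') (enum (powerset [set~ p v']))) F.

Lemma length_lift_vertices F :
  List.length (lift_vertices F) = (List.length F * 2 ^ (#|V0| - 1))%N.
Proof.
elim: F => //= v' F IH.
rewrite List.length_app List.length_map IH List_length_size -cardE.
by rewrite card_powerset cardsC1 subn1.
Qed.

Lemma lift_in_lift_vertices F v' s l z : List.In v' F ->
  semi_induced e lt (p v' :: s) -> lifts E p (p v' :: s) v' l -> List.In z l ->
  List.In z (lift_vertices F).
Proof.
move=> v'F si lift /(lift_end_prefix si lift) [S SP /endpoint_lift_end <-].
apply/List.in_flat_map; exists v'; split => //.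
by apply: List.in_map; apply/List_InP; rewrite mem_enum.
Qed.

Lemma F_sub_lift_vertices F v' : List.In v' F -> List.In v' (lift_vertices F).
Proof.
move=> v'F; apply: (lift_in_lift_vertices (s := [::]) (l := [:: v'])) v'F _ _ _ => //.
- split; first by split; [|split].
  by move=> i [|[|j]].
- by left.
Qed.

Lemma SIPL_lift_vertices F (Q : V -> Prop) :
  (forall x, List.In x (lift_vertices F) -> Q x) -> SIPL e E lt p Q F.
Proof.
move=> LQ v' v'F; split; first exact/LQ/F_sub_lift_vertices.
case=> [|x s] //= si [xv]; subst x.
have [l lift] := lift_exists cov (semi_induced_path si).
exists l; have [h [ch m]] := lift; split => //; split.
  apply: (@List.NoDup_map_inv _ _ p); rewrite List_map_map m.
  exact/uniq_NoDup/(semi_induced_uniq si).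
split => //; split; last by rewrite List_map_map.
by move=> z zl; apply/LQ/(lift_in_lift_vertices v'F si lift).
Qed.

Lemma lift_vertices_walk F x : List.In x (lift_vertices F) ->
  exists2 v', List.In v' F & walk E (fun y => List.In y (lift_vertices F)) v' x.
Proof.
case/List.in_flat_map => v' [v'F /List.in_map_iff [S [<- _]]]; exists v' => //.
case: (endpoint_spec v' S) => [[s [l [si _ lift <-]]]|[_ ->]].
  have [h [ch _]] := lift; apply: E_chain_walk h erefl ch _.
  by move=> z; apply: lift_in_lift_vertices v'F si lift.
exact/walk_nil/F_sub_lift_vertices.
Qed.

End LiftVertices.

Theorem proposition3p10 (V0 : finType) (e : rel V0) (lt : rel V0)
  (V : Type) (E : V -> V -> Prop) (p : V -> V0) (F : list V) :
  simple_graph0 e -> simple_graph E -> strict_total_order lt ->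
  covering e E p ->
  F <> nil -> List.NoDup F ->
  exists L : list V,
    List.NoDup L /\
    (List.length L <= List.length F * 2 ^ (#|V0| - 1))%N /\
    SIPL e E lt p (fun x => List.In x L) F /\
    (connected_on E (fun x => List.In x F) -> connected_on E (fun x => List.In x L)).
Proof.
move=> _ [E_sym _] lto cov _ _.
pose L := List.nodup (fun x y => excluded_middle_informative (x = y))
                     (lift_vertices e lt E p F).
have inL x : List.In x L <-> List.In x (lift_vertices e lt E p F) by apply: List.nodup_In.
exists L; split; first exact: List.NoDup_nodup.
split.
  rewrite -(length_lift_vertices e lt E p F); apply/leP.
  by apply: List.NoDup_incl_length; [exact: List.NoDup_nodup|move=> x /inL].
split; first by apply: (SIPL_lift_vertices lto cov) => x /inL.
apply: (connected_on_walk_from E_sym).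
- by move=> x /(F_sub_lift_vertices lto cov) /inL.
- move=> y /inL /(lift_vertices_walk lto cov) [v' v'F w]; exists v' => //.
  by apply: walk_sub w => z /inL.
Qed.
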